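(* Let $n\ge2$, $K\ge1$, and write $\Phi_K=(P_{1,K},\dots,P_{n,K})\colon(\mathbb{C}^{n(n-1)/2})^K\to\mathbb{C}^n$. Then each $P_{k,K}$ is a polynomial that is no more than linear in each of the variables $z_{ij,l}$. Moreover, if $K$ is even, $P_{k,K}$ depends only on $Z_1,\dots,Z_{K-1}$ and the variables $z_{ij,K}$ with $1\le i<j\le k$ (in particular $P_{1,K}$ does not depend on $Z_K$); if $K$ is odd, $P_{k,K}$ depends only on $Z_1,\dots,Z_{K-1}$ and the variables $z_{ij,K}$ with $k\le j<i\le n$.
   Context: For $k$ even, $Z_k=(z_{ij,k})_{1\le i<j\le n}$ and $M_k(Z_k)$ is the upper triangular unipotent $n\times n$ matrix with entry $z_{ij,k}$ at $(i,j)$, $i<j$; for $k$ odd, $Z_k=(z_{ij,k})_{1\le j<i\le n}$ and $M_k(Z_k)$ is the lower triangular unipotent matrix with entry $z_{ij,k}$ at $(i,j)$, $i>j$. $\Psi_K(Z_1,\dots,Z_K)=M_1(Z_1)^{-1}\cdots M_K(Z_K)^{-1}$, $\pi_n$ maps a matrix to its last row, and $\Phi_K=\pi_n\circ\Psi_K$. A polynomial $p$ is no more than linear in a variable $x$ if $p=x\tilde p+\tilde q$ with $\tilde p,\tilde q$ polynomials independent of $x$. *)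

From HB Require Import structures.
From mathcomp Require Import all_boot all_order all_algebra.
Set Implicit Arguments. Unset Strict Implicit. Unset Printing Implicit Defensive.
Import Order.TTheory GRing.Theory Num.Theory.
Local Open Scope ring_scope.

(* Variable z_{ij,l}: l : 'I_K is the 0-based block index (paper index l.+1),
   i j : 'I_n 0-based row/column indices. *)
Definition var_t (K n : nat) := ('I_K * 'I_n * 'I_n)%type.

(* z_{ij,l} is an actual variable: paper index l.+1 even -> i < j (upper),
   odd -> j < i (lower). *)
Definition valid_var (K n : nat) (v : var_t K n) : bool :=
  let: (l, i, j) := v in
  if ~~ odd l.+1 then (i < j)%N else (j < i)%N.

Definition Mk (R : ringType) (K n : nat) (l : 'I_K) (Zl : 'M[R]_n) : 'M[R]_n :=
  \matrix_(i, j) (if i == j then 1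
                  else if valid_var (l, i, j) then Zl i j else 0).

Definition Psi (R : fieldType) (K n : nat) (Z : 'I_K -> 'M[R]_n) : 'M[R]_n :=
  \big[mulmx/1%:M]_(l < K) invmx (Mk l (Z l)).

Definition lastrow (R : ringType) (n : nat) : 'M[R]_n -> 'rV[R]_n :=
  match n return 'M[R]_n -> 'rV[R]_n with
  | 0 => fun _ => 0
  | m.+1 => fun A => row ord_max A
  end.

(* Phi_K = pi_n o Psi_K; its k-th component is P_{k,K} *)
Definition Phi (R : fieldType) (K n : nat) (Z : 'I_K -> 'M[R]_n) : 'rV[R]_n :=
  lastrow (Psi Z).

Inductive pexpr (V : Type) (R : Type) : Type :=
| PVar of V
| PConst of R
| PAdd of pexpr V R & pexpr V R
| PMul of pexpr V R & pexpr V R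
| POpp of pexpr V R.

Fixpoint peval (V : Type) (R : ringType) (e : V -> R) (p : pexpr V R) : R :=
  match p with
  | PVar v => e v
  | PConst c => c
  | PAdd p q => peval e p + peval e q
  | PMul p q => peval e p * peval e q
  | POpp p => - peval e p
  end.

Fixpoint pfree (V : eqType) (R : Type) (x : V) (p : pexpr V R) : bool :=
  match p with
  | PVar v => v != x
  | PConst _ => true
  | PAdd p q => pfree x p && pfree x q
  | PMul p q => pfree x p && pfree x q
  | POpp p => pfree x p
  end.

Definition env (R : Type) (K n : nat) (Z : 'I_K -> 'M[R]_n) (v : var_t K n) : R :=
  let: (l, i, j) := v in Z l i j.

From HB Require Import structures.
From mathcomp Require Import all_boot all_order all_algebra.
Import Order.TTheory GRing.Theory Num.Theory.
Local Open Scope ring_scope.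

Set Implicit Arguments.
Unset Strict Implicit.
Unset Printing Implicit Defensive.

(* Each factor M_l(Z_l) is unipotent and triangular for a ranking g_l of the
   indices (g_l s = s for upper, g_l s = n - s for lower factors), and its
   strictly g_l-upper entries are the variables z_{st,l}.
   - Expanding U^{-1} U = 1 along column k gives a recursion for column k of
     U^{-1} in terms of the columns s with g s < g k.  By induction along g,
     every entry of M_l(Z_l)^{-1} is a polynomial that is at most linear in
     each variable and involves only the block Z_l; moreover column k of
     U^{-1} only depends on the entries of U lying in columns b with
     g b <= g k.
   - Multi-affinity in variables of disjoint blocks is preserved by matrix
     products, so every entry of Psi_K = prod_l M_l^{-1} is multi-affine.
   - Writing Psi_K = Psi_{K-1} M_K^{-1}, the entry P_{k,K} = (Psi_K)_{n,k}
     only involves column k of M_K^{-1}, hence only the z_{ij,K} in columns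
     j with g_K j <= g_K k, which is exactly the parity statement. *)

Section PolynomialFunctions.
Variables (R : comNzRingType) (K n : nat).
Implicit Types (x y : var_t K n) (F G : ('I_K -> 'M[R]_n) -> R).

Definition free_of x F :=
  exists p : pexpr (var_t K n) R, pfree x p /\ forall Z, F Z = peval (env Z) p.

Definition affine_in x F :=
  exists pt qt : pexpr (var_t K n) R, [/\ pfree x pt, pfree x qt &
    forall Z, F Z = env Z x * peval (env Z) pt + peval (env Z) qt].

Definition multiaffine (B : seq 'I_K) F :=
  (forall x, affine_in x F) /\ (forall x, x.1.1 \notin B -> free_of x F).

Lemma free_of_ext x F G : (forall Z, F Z = G Z) -> free_of x G -> free_of x F.
Proof. by move=> eFG [p [px Gp]]; exists p; split=> // Z; rewrite eFG. Qed.

Lemma free_of_const x (c : R) : free_of x (fun _ => c).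
Proof. by exists (PConst _ c). Qed.

Lemma free_of_var x y : y != x -> free_of x (fun Z => env Z y).
Proof. by move=> yx; exists (PVar _ y). Qed.

Lemma free_of_add x F G : free_of x F -> free_of x G -> free_of x (fun Z => F Z + G Z).
Proof.
move=> [p [px Fp]] [q [qx Gq]]; exists (PAdd p q).
by rewrite /= px qx; split=> // Z; rewrite Fp Gq.
Qed.

Lemma free_of_mul x F G : free_of x F -> free_of x G -> free_of x (fun Z => F Z * G Z).
Proof.
move=> [p [px Fp]] [q [qx Gq]]; exists (PMul p q).
by rewrite /= px qx; split=> // Z; rewrite Fp Gq.
Qed.

Lemma free_of_sub x F G : free_of x F -> free_of x G -> free_of x (fun Z => F Z - G Z).
Proof.
move=> freeF [q [qx Gq]]; apply: free_of_add => //.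
by exists (POpp q); split=> // Z; rewrite Gq.
Qed.

Lemma free_of_sum x (I : Type) (r : seq I) (P : pred I) (G : I -> ('I_K -> 'M[R]_n) -> R) :
  (forall i, P i -> free_of x (G i)) -> free_of x (fun Z => \sum_(i <- r | P i) G i Z).
Proof.
move=> freeG; elim: r => [|a r IH].
  by apply: (@free_of_ext _ _ (fun _ => 0)) => [Z|]; [rewrite big_nil|exact: free_of_const].
apply: (@free_of_ext _ _ (fun Z => (if P a then G a Z else 0) + \sum_(i <- r | P i) G i Z)).
  by move=> Z; rewrite big_cons; case: (P a); rewrite ?add0r.
by apply: free_of_add => //; case Pa: (P a); [exact: freeG|exact: free_of_const].
Qed.

Lemma affine_in_ext x F G : (forall Z, F Z = G Z) -> affine_in x G -> affine_in x F.
Proof. by move=> eFG [p [q [px qx Gpq]]]; exists p, q; split=> // Z; rewrite eFG. Qed.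

Lemma affine_of_free x F : free_of x F -> affine_in x F.
Proof.
by move=> [p [px Fp]]; exists (PConst _ 0), p; split=> // Z; rewrite Fp /= mulr0 add0r.
Qed.

Lemma affine_in_var x : affine_in x (fun Z => env Z x).
Proof. by exists (PConst _ 1), (PConst _ 0); split=> // Z; rewrite /= mulr1 addr0. Qed.

Lemma affine_in_add x F G :
  affine_in x F -> affine_in x G -> affine_in x (fun Z => F Z + G Z).
Proof.
move=> [p [q [px qx Fpq]]] [p' [q' [px' qx' Gpq]]].
exists (PAdd p p'), (PAdd q q'); rewrite /= px qx px' qx'; split=> // Z.
by rewrite Fpq Gpq mulrDr addrACA.
Qed.

Lemma affine_in_sub x F G :
  affine_in x F -> affine_in x G -> affine_in x (fun Z => F Z - G Z).
Proof.
move=> affF [p [q [px qx Gpq]]]; apply: affine_in_add => //.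
by exists (POpp p), (POpp q); split=> // Z; rewrite Gpq /= opprD mulrN.
Qed.

Lemma affine_in_mull x F G : affine_in x F -> free_of x G -> affine_in x (fun Z => F Z * G Z).
Proof.
move=> [p [q [px qx Fpq]]] [c [cx Gc]].
exists (PMul p c), (PMul q c); rewrite /= px qx cx; split=> // Z.
by rewrite Fpq Gc /= mulrDl mulrA.
Qed.

Lemma affine_in_mulr x F G : free_of x F -> affine_in x G -> affine_in x (fun Z => F Z * G Z).
Proof.
move=> freeF affG; apply: (@affine_in_ext _ _ (fun Z => G Z * F Z)) => [Z|].
  exact: mulrC.
exact: affine_in_mull.
Qed.

Lemma affine_in_sum x (I : Type) (r : seq I) (P : pred I) (G : I -> ('I_K -> 'M[R]_n) -> R) :
  (forall i, P i -> affine_in x (G i)) -> affine_in x (fun Z => \sum_(i <- r | P i) G i Z).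
Proof.
move=> affG; elim: r => [|a r IH].
  apply: (@affine_in_ext _ _ (fun _ => 0)) => [Z|]; first by rewrite big_nil.
  exact/affine_of_free/free_of_const.
apply: (@affine_in_ext _ _ (fun Z => (if P a then G a Z else 0) + \sum_(i <- r | P i) G i Z)).
  by move=> Z; rewrite big_cons; case: (P a); rewrite ?add0r.
apply: affine_in_add => //; case Pa: (P a); first exact: affG.
exact/affine_of_free/free_of_const.
Qed.

Lemma affine_in_poly x F :
  affine_in x F -> exists p : pexpr (var_t K n) R, forall Z, F Z = peval (env Z) p.
Proof. by move=> [p [q [_ _ Fpq]]]; exists (PAdd (PMul (PVar _ x) p) q). Qed.

Lemma multiaffine_prod (N : 'I_K -> ('I_K -> 'M[R]_n) -> 'M[R]_n) (r : seq 'I_K) :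
  uniq r -> (forall l i j, multiaffine [:: l] (fun Z => N l Z i j)) ->
  forall i j, multiaffine r (fun Z => (\big[mulmx/1%:M]_(l <- r) N l Z) i j).
Proof.
move=> + multiN; elim: r => [_ i j|a r IH /= /andP[a_r uniq_r] i j].
  have free_id x : free_of x (fun Z => (\big[mulmx/1%:M]_(l <- [::]) N l Z) i j).
    apply: (@free_of_ext _ _ (fun _ => (i == j)%:R)) => [Z|]; last exact: free_of_const.
    by rewrite big_nil mxE.
  by split=> [x|x _]; [apply: affine_of_free|].
have prodE Z : (\big[mulmx/1%:M]_(l <- a :: r) N l Z) i j =
    \sum_t N a Z i t * (\big[mulmx/1%:M]_(l <- r) N l Z) t j by rewrite big_cons mxE.
split=> [x|x].
- apply: (affine_in_ext prodE); apply: affine_in_sum => t _.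
  have [xa|xa] := eqVneq x.1.1 a.
  + by apply: affine_in_mull; [apply: (multiN a i t).1|apply: (IH uniq_r t j).2; rewrite xa].
  + apply: affine_in_mulr; last exact: (IH uniq_r t j).1.
    by apply: (multiN a i t).2; rewrite inE.
- rewrite inE negb_or => /andP[xa xr]; apply: (free_of_ext prodE).
  apply: free_of_sum => t _; apply: free_of_mul; last exact: (IH uniq_r t j).2.
  by apply: (multiN a i t).2; rewrite inE.
Qed.

End PolynomialFunctions.

Section UnipotentInverse.
Variables (R : comUnitRingType) (n : nat) (g : 'I_n -> nat).

Definition g_unipotent (U : 'M[R]_n) :=
  (forall s, U s s = 1) /\ (forall s t, s != t -> (g t <= g s)%N -> U s t = 0).

Lemma rank_ind (P : 'I_n -> Prop) :
  (forall k, (forall s, (g s < g k)%N -> P s) -> P k) -> forall k, P k.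
Proof.
move=> IH k; have [m gk] := ubnP (g k); elim: m k gk => [//|m IHm] k gk.
by apply: IH => s gs; apply: IHm; exact: leq_trans gs gk.
Qed.

(* Expanding (U^-1 U)_{tk} = delta_{tk} along the pivot U_kk = 1 gives column
   k of U^-1 from the columns of lower rank. *)
Lemma invmx_col_rec (U : 'M[R]_n) t k : U \in unitmx -> g_unipotent U ->
  invmx U t k = (t == k)%:R - \sum_(s | (g s < g k)%N) invmx U t s * U s k.
Proof.
move=> Uunit [U1 U0].
have -> : \sum_(s | (g s < g k)%N) invmx U t s * U s k =
          \sum_(s | s != k) invmx U t s * U s k.
  rewrite [RHS](bigID (fun s => (g s < g k)%N)) /= [X in _ + X]big1 ?addr0.
    by apply: eq_bigl => s; case: eqVneq => [->|_]; rewrite ?ltnn.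
  by move=> s /andP[sk]; rewrite -leqNgt => /(U0 _ _ sk) ->; rewrite mulr0.
have := congr1 (fun M : 'M[R]_n => M t k) (mulVmx Uunit).
by rewrite !mxE (bigD1 k) //= U1 mulr1 => <-; rewrite addrK.
Qed.

Lemma invmx_col_local (U U' : 'M[R]_n) k :
  U \in unitmx -> U' \in unitmx -> g_unipotent U -> g_unipotent U' ->
  (forall s b, (g b <= g k)%N -> U s b = U' s b) ->
  forall t, invmx U t k = invmx U' t k.
Proof.
move=> Uunit U'unit Uunip U'unip eqUU'.
suff: (g k <= g k)%N -> forall t, invmx U t k = invmx U' t k by apply.
elim/rank_ind: {-2}k => j IH gj t.
rewrite (invmx_col_rec _ _ Uunit) // (invmx_col_rec _ _ U'unit) //.
congr (_ - _); apply: eq_bigr => s gs.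
by rewrite IH ?eqUU' // ltnW // (leq_trans gs).
Qed.

End UnipotentInverse.

Section InverseEntries.
Variables (R : comUnitRingType) (K n : nat) (g : 'I_n -> nat) (l : 'I_K).
Variable f : ('I_K -> 'M[R]_n) -> 'M[R]_n.
Hypothesis f_unit : forall Z, f Z \in unitmx.
Hypothesis f_unipotent : forall Z, g_unipotent g (f Z).
Hypothesis f_var : forall Z s t, (g s < g t)%N -> f Z s t = Z l s t.

Lemma invmx_entry_rec Z t k : invmx (f Z) t k =
  (t == k)%:R - \sum_(s | (g s < g k)%N) invmx (f Z) t s * env Z (l, s, k).
Proof.
rewrite (invmx_col_rec (g:=g)) //; congr (_ - _).
by apply: eq_bigr => s gs; rewrite f_var.
Qed.

Lemma invmx_entry_free t k (x : var_t K n) :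
  (x.1.1 != l) || (g k < g x.2)%N -> free_of x (fun Z => invmx (f Z) t k).
Proof.
elim/(rank_ind (g:=g)): k => k IH xk.
apply: (free_of_ext (fun Z => invmx_entry_rec Z t k)); apply: free_of_sub.
  exact: free_of_const.
apply: free_of_sum => s gs; apply: free_of_mul.
  by apply: IH => //; case/orP: xk => [->//|gk]; rewrite (ltn_trans gs gk) orbT.
by apply: free_of_var; apply: contraTneq xk => <- /=; rewrite eqxx ltnn.
Qed.

Lemma invmx_entry_affine t k (x : var_t K n) : affine_in x (fun Z => invmx (f Z) t k).
Proof.
elim/(rank_ind (g:=g)): k => k IH.
apply: (affine_in_ext (fun Z => invmx_entry_rec Z t k)); apply: affine_in_sub.
  exact/affine_of_free/free_of_const.
apply: affine_in_sum => s gs.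
have [<-|xs] := eqVneq (l, s, k) x.
  by apply: affine_in_mulr; [apply: invmx_entry_free; rewrite /= gs orbT|exact: affine_in_var].
by apply: affine_in_mull; [exact: IH|exact: free_of_var].
Qed.

End InverseEntries.

Section TriangularFactors.
Variables (R : comUnitRingType) (K n : nat).
Implicit Types (l : 'I_K) (M : 'M[R]_n).

(* The ranking of indices for which M_l is upper triangular: the identity
   for even paper index l+1 (upper factors), the reversal for odd ones. *)
Definition rank_of l (s : 'I_n) : nat := if ~~ odd l.+1 then val s else (n - val s)%N.

Lemma valid_var_rank l (s t : 'I_n) : valid_var (l, s, t) = (rank_of l s < rank_of l t)%N.
Proof. by rewrite /valid_var /rank_of /=; case: ifP => // _; rewrite ltn_sub2lE // ltnW. Qed.

Lemma Mk_unipotent l M : g_unipotent (rank_of l) (Mk l M).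
Proof.
split=> [s|s t st gts]; rewrite mxE ?eqxx //.
by rewrite (negbTE st) valid_var_rank ltnNge gts.
Qed.

Lemma Mk_var l M (s t : 'I_n) : (rank_of l s < rank_of l t)%N -> Mk l M s t = M s t.
Proof.
move=> gst; have st : s != t by apply: contraTneq gst => ->; rewrite ltnn.
by rewrite mxE (negbTE st) valid_var_rank gst.
Qed.

(* M_l is triangular with unit diagonal, hence has determinant 1. *)
Lemma Mk_unit l M : Mk l M \in unitmx.
Proof.
have [diag1 off0] := Mk_unipotent l M.
have det1 (A : 'M[R]_n) : is_trig_mx A -> (forall i, A i i = 1) -> \det A = 1.
  by move=> /det_trig -> A1; apply: big1 => i _.
rewrite unitmxE; suff -> : \det (Mk l M) = 1 by exact: unitr1.
case: (boolP (odd l.+1)) => [oddl|evenl].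
  apply: det1 => //; apply/is_trig_mxP => i j ij.
  apply: off0; first by apply: contraTneq ij => ->; rewrite ltnn.
  by rewrite /rank_of oddl leq_sub2l // ltnW.
rewrite -det_tr; apply: det1 => [|i]; last by rewrite mxE.
apply/is_trig_mxP => i j ij; rewrite mxE.
apply: off0; first by apply: contraTneq ij => ->; rewrite ltnn.
by rewrite /rank_of evenl ltnW.
Qed.

Lemma invMk_multiaffine l (i j : 'I_n) :
  multiaffine [:: l] (fun Z : 'I_K -> 'M[R]_n => invmx (Mk l (Z l)) i j).
Proof.
pose f (Z : 'I_K -> 'M[R]_n) := Mk l (Z l).
have f_unit Z : f Z \in unitmx := Mk_unit l (Z l).
have f_unip Z : g_unipotent (rank_of l) (f Z) := Mk_unipotent l (Z l).
have f_var Z s t : (rank_of l s < rank_of l t)%N -> f Z s t = Z l s t := @Mk_var l (Z l) s t.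
split=> [x|x]; first exact: invmx_entry_affine f_unit f_unip f_var i j x.
by rewrite inE => xl; apply: (invmx_entry_free f_unit f_unip f_var i); rewrite xl.
Qed.

End TriangularFactors.

Section LastRow.
Variables (R : fieldType) (n : nat).

Lemma Phi_entry K (Z : 'I_K -> 'M[R]_n.+1) k : Phi Z 0 k = Psi Z ord_max k.
Proof. by rewrite /Phi /= mxE. Qed.

Lemma Phi_multiaffine K (k : 'I_n.+1) :
  multiaffine (index_enum 'I_K) (fun Z : 'I_K -> 'M[R]_n.+1 => Phi Z 0 k).
Proof.
have [aff free] := multiaffine_prod (index_enum_uniq 'I_K) (@invMk_multiaffine R K n.+1) ord_max k.
split=> [x|x xK]; [apply: affine_in_ext (aff x)|apply: free_of_ext (free x xK)];
  by move=> Z; rewrite Phi_entry.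
Qed.

Lemma Psi_recr K (Z : 'I_K.+1 -> 'M[R]_n.+1) :
  Psi Z = Psi (fun l : 'I_K => Z (widen_ord (leqnSn K) l)) *m invmx (Mk (@ord_max K) (Z ord_max)).
Proof. by rewrite /Psi !mulmxE !idmxE big_ord_recr. Qed.

Lemma Mk_valid_eq K (l : 'I_K) (M M' : 'M[R]_n.+1) :
  (forall i j, valid_var (l, i, j) -> M i j = M' i j) -> Mk l M = Mk l M'.
Proof. by move=> eqM; apply/matrixP => i j; rewrite !mxE; case: ifP => // _; case: ifP => // /eqM. Qed.

Lemma Phi_local_last K (Z Z' : 'I_K.+1 -> 'M[R]_n.+1) (k : 'I_n.+1) :
  (forall (l : 'I_K.+1) i j, valid_var (l, i, j) -> (l.+1 < K.+1)%N -> Z l i j = Z' l i j) ->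
  (forall s b, valid_var (@ord_max K, s, b) ->
     (rank_of (@ord_max K) b <= rank_of (@ord_max K) k)%N -> Z ord_max s b = Z' ord_max s b) ->
  Phi Z 0 k = Phi Z' 0 k.
Proof.
move=> eq_first eq_last; rewrite !Phi_entry !Psi_recr !mxE; apply: eq_bigr => t _.
congr (_ * _).
  rewrite /Psi; congr (fun_of_matrix _ _ t); apply: eq_bigr => l _; congr invmx.
  by apply: Mk_valid_eq => i j v; apply: (eq_first (widen_ord _ l)) => //=; rewrite ltnS.
apply: (invmx_col_local (g := rank_of ord_max)); rewrite ?Mk_unit //; try exact: Mk_unipotent.
move=> s b rb; rewrite !mxE; case: ifP => // _; case: ifP => // v.
exact: eq_last.
Qed.

(* For even K+1 the last factor is upper triangular: P_{k,K+1} involves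
   only the z_{ij,K+1} with i < j <= k. *)
Lemma Phi_local_even K (k : 'I_n.+1) (Z Z' : 'I_K.+1 -> 'M[R]_n.+1) : ~~ odd K.+1 ->
  (forall (l : 'I_K.+1) (i j : 'I_n.+1), valid_var (l, i, j) ->
     (l.+1 < K.+1)%N \/ (i < j <= k)%N -> Z l i j = Z' l i j) ->
  Phi Z 0 k = Phi Z' 0 k.
Proof.
move=> evenK1 eqZ; have oddK : odd K := negPn evenK1; apply: Phi_local_last => [l i j v lK|s b v].
  by apply: (eqZ _ _ _ v); left.
move=> bk; apply: (eqZ _ _ _ v); right.
by move: v bk; rewrite /valid_var /rank_of /= negbK oddK => -> ->.
Qed.

(* For odd K+1 the last factor is lower triangular: P_{k,K+1} involves
   only the z_{ij,K+1} with k <= j < i. *)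
Lemma Phi_local_odd K (k : 'I_n.+1) (Z Z' : 'I_K.+1 -> 'M[R]_n.+1) : odd K.+1 ->
  (forall (l : 'I_K.+1) (i j : 'I_n.+1), valid_var (l, i, j) ->
     (l.+1 < K.+1)%N \/ (k <= j < i)%N -> Z l i j = Z' l i j) ->
  Phi Z 0 k = Phi Z' 0 k.
Proof.
move=> oddK1 eqZ; have evenK : ~~ odd K := oddK1; apply: Phi_local_last => [l i j v lK|s b v].
  by apply: (eqZ _ _ _ v); left.
move=> kb; apply: (eqZ _ _ _ v); right.
move: kb v; rewrite /valid_var /rank_of /= evenK /= leq_sub2lE; last exact: ltnW.
by move=> -> ->.
Qed.

End LastRow.

Theorem mainTheorem10 (R : numClosedFieldType) (n K : nat)
    (hn : (2 <= n)%N) (hK : (1 <= K)%N) :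
  (forall k : 'I_n,
     (* P_{k,K} is a polynomial *)
     (exists p : pexpr (var_t K n) R,
        forall Z : 'I_K -> 'M[R]_n, Phi Z 0 k = peval (env Z) p) /\
     (* no more than linear in each variable z_{ij,l} *)
     (forall x : var_t K n, valid_var x ->
        exists pt qt : pexpr (var_t K n) R,
          [/\ pfree x pt, pfree x qt &
              forall Z : 'I_K -> 'M[R]_n,
                Phi Z 0 k = env Z x * peval (env Z) pt + peval (env Z) qt])) /\
  (~~ odd K ->
     forall (k : 'I_n) (Z Z' : 'I_K -> 'M[R]_n),
       (forall (l : 'I_K) (i j : 'I_n), valid_var (l, i, j) ->
          (l.+1 < K)%N \/ (i < j <= k)%N -> Z l i j = Z' l i j) ->
       Phi Z 0 k = Phi Z' 0 k) /\
  (odd K ->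
     forall (k : 'I_n) (Z Z' : 'I_K -> 'M[R]_n),
       (forall (l : 'I_K) (i j : 'I_n), valid_var (l, i, j) ->
          (l.+1 < K)%N \/ (k <= j < i)%N -> Z l i j = Z' l i j) ->
       Phi Z 0 k = Phi Z' 0 k).
Proof.
case: n hn => [//|n] _; split.
  move=> k; have [affine_Phi _] := Phi_multiaffine R K k.
  split=> [|x _]; last exact: affine_Phi.
  exact: affine_in_poly (affine_Phi (Ordinal hK, k, k)).
case: K hK => [//|K] _.
by split=> [evenK|oddK] k Z Z'; [exact: Phi_local_even|exact: Phi_local_odd].
Qed.
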